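(* Let $\boldsymbol{\pi}$ be any joint policy (written in conditional form as below). Then $$ J(\boldsymbol{\pi}_* ) - J(\boldsymbol{\pi}) = \frac{1}{1-\gamma} \sum_{m=1}^N \mathbb{E}_{s \sim \nu_*,\ \mathbf{a}^{1:m-1} \sim \boldsymbol{\pi}_*^{1:m-1}(\cdot|s)}\Big\langle Q_{\boldsymbol{\pi}}^{1:m}(s, \mathbf{a}^{1:m-1}, \cdot),\ \pi_*^m(\cdot|s,\mathbf{a}^{1:m-1}) - \pi^m(\cdot|s, \mathbf{a}^{1:m-1}) \Big\rangle, $$ where the inner product is over $a^m \in \mathcal{A}$.
   Context: A fully cooperative Markov game is a tuple $(\mathcal{N},\mathcal{S},\mathcal{A}^N,\mathcal{P},r,\gamma)$ with agents $\mathcal{N}=\{1,\dots,N\}$, finite state space $\mathcal{S}$, finite individual action space $\mathcal{A}$ (joint action space $\mathcal{A}^N$), transition kernel $\mathcal{P}(\cdot|s,\mathbf{a})$, common reward $r:\mathcal{S}\times\mathcal{A}^N\to[0,1]$ and discount $\gamma\in[0,1)$. For a set of agents $P$, $\mathbf{a}^P$ is their joint action; $\mathbf{a}^{1:m}=(a^1,\dots,a^m)$. Joint policies are written in sequential conditional form $\boldsymbol{\pi}(\mathbf{a}|s)=\prod_{m=1}^N \pi^m(a^m|s,\mathbf{a}^{1:m-1})$, and $\boldsymbol{\pi}^{1:m}(\cdot|s)$ denotes the induced distribution of $\mathbf{a}^{1:m}$. $V_{\boldsymbol{\pi}}(s)$ and $Q_{\boldsymbol{\pi}}(s,\mathbf{a})$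 are the usual discounted value and action-value functions. The multi-agent action value function of agents $1:m$ is $Q^{1:m}_{\boldsymbol{\pi}}(s,\mathbf{a}^{1:m})=\mathbb{E}_{\tilde{\mathbf{a}}}\,Q_{\boldsymbol{\pi}}(s,\mathbf{a}^{1:m},\tilde{\mathbf{a}})$, where $\tilde{\mathbf{a}}=\mathbf{a}^{m+1:N}$ is drawn from $\boldsymbol{\pi}$ (the remaining agents follow $\boldsymbol{\pi}$). $\boldsymbol{\pi}_*$ denotes an optimal joint policy and $\nu_*$ its stationary state distribution; the objective is $J(\boldsymbol{\pi})=\mathbb{E}_{s\sim\nu_*}V_{\boldsymbol{\pi}}(s)$. *)

From mathcomp Require Import all_boot all_order all_algebra.
From mathcomp Require Import all_classical all_reals all_analysis.
Set Implicit Arguments. Unset Strict Implicit. Unset Printing Implicit Defensive.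
Import Order.TTheory GRing.Theory Num.Theory.
Local Open Scope ring_scope.

Section MG.
Variables (R : realType) (S A : finType) (N : nat).

Definition jact := {ffun 'I_N -> A}.

(* a^{1:m} for m : 'I_N is the prefix of the first m agents (0-indexed: 0..m-1) *)
Definition prefix (m : 'I_N) (a : jact) : m.-tuple A :=
  [tuple a (widen_ord (ltnW (ltn_ord m)) i) | i < m].

(* a joint policy in sequential conditional form:
   pol m s b x = pi^m(x | s, b) where b is the joint action of the previous agents *)
Definition cpolicy := forall m : 'I_N, S -> m.-tuple A -> A -> R.

Definition valid_policy (pol : cpolicy) : Prop :=
  forall m s b, (forall x, 0 <= pol m s b x) /\ \sum_x pol m s b x = 1.

Definition joint (pol : cpolicy) (s : S) (a : jact) : R :=
  \prod_(m < N) pol m s (prefix m a) (a m).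

Definition marg (pol : cpolicy) (s : S) (m : 'I_N) (b : m.-tuple A) : R :=
  \sum_(a : jact | prefix m a == b) joint pol s a.

Variables (P : S -> jact -> S -> R) (r : S -> jact -> R) (gamma : R).

Definition is_kernel : Prop :=
  forall s a, (forall s', 0 <= P s a s') /\ \sum_s' P s a s' = 1.

Definition Ppol (pol : cpolicy) (s s' : S) : R := \sum_a joint pol s a * P s a s'.
Definition rpol (pol : cpolicy) (s : S) : R := \sum_a joint pol s a * r s a.

Fixpoint rstep (pol : cpolicy) (t : nat) (s : S) : R :=
  match t with
  | 0 => rpol pol s
  | t'.+1 => \sum_s' Ppol pol s s' * rstep pol t' s'
  end.

Definition V (pol : cpolicy) (s : S) : R :=
  limn (fun n => \sum_(0 <= t < n) gamma ^+ t * rstep pol t s).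

Definition Q (pol : cpolicy) (s : S) (a : jact) : R :=
  r s a + gamma * \sum_s' P s a s' * V pol s'.

(* multi-agent action value of agents 0..m (1:m+1 in 1-indexed notation):
   Qm pol s m b x = Q^{1:m+1}_pi(s, b, x), the remaining agents k > m
   drawn sequentially from pol. *)
Definition Qm (pol : cpolicy) (s : S) (m : 'I_N) (b : m.-tuple A) (x : A) : R :=
  \sum_(a : jact | (prefix m a == b) && (a m == x))
     (\prod_(k < N | (m < k)%N) pol k s (prefix k a) (a k)) * Q pol s a.

Definition optimal (pol : cpolicy) : Prop :=
  valid_policy pol /\ forall pol', valid_policy pol' -> forall s, V pol' s <= V pol s.

Definition stationary (pol : cpolicy) (nu : S -> R) : Prop :=
  (forall s, 0 <= nu s) /\ \sum_s nu s = 1 /\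
  forall s', nu s' = \sum_s nu s * Ppol pol s s'.

Definition J (nu : S -> R) (pol : cpolicy) : R := \sum_s nu s * V pol s.

End MG.

From Pilot Require Import Defs.
From mathcomp Require Import all_boot all_order all_algebra.
From mathcomp Require Import all_classical all_reals all_analysis.
From mathcomp Require Import ring lra.
Import Order.TTheory GRing.Theory Num.Theory numFieldNormedType.Exports.
Set Implicit Arguments. Unset Strict Implicit. Unset Printing Implicit Defensive.
Local Open Scope ring_scope.

(** For a fixed state s, the m-th summand is the difference between the mean
  of Q_pi(s, .) when agents 1..m follow pi_* and the rest follow pi, and the
  same mean when only agents 1..m-1 follow pi_*.  The sum over m therefore
  telescopes to E_{a ~ pi_*} Q_pi(s, a) - V_pi(s), which by the Bellman
  equations is (V_* - V_pi)(s) - gamma (P_{pi_*} (V_* - V_pi))(s).  Averaging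
  over the stationary distribution nu_* of pi_* turns the second term into
  gamma times the first, leaving (1 - gamma) (J pi_* - J pi). *)

(* [seq.prefix] would otherwise shadow the prefix of a joint action. *)
Local Notation prefix := Defs.prefix.

Lemma convex_comb_itv (R : numDomainType) (I : finType) (w g : I -> R) :
  (forall i, 0 <= w i) -> \sum_i w i = 1 -> (forall i, 0 <= g i <= 1) ->
  0 <= \sum_i w i * g i <= 1.
Proof.
move=> w_ge0 w_sum1 g_itv; apply/andP; split.
  by apply: sumr_ge0 => i _; rewrite mulr_ge0 //; case/andP: (g_itv i).
rewrite -w_sum1; apply: ler_sum => i _.
by rewrite ler_piMr //; case/andP: (g_itv i).
Qed.

Section ProdSplit.
Variables (R : comRingType) (N : nat) (g : 'I_N -> R) (m : 'I_N).

Lemma prod_ord_ltS :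
  \prod_(k < N | (k < m.+1)%N) g k = (\prod_(k < N | (k < m)%N) g k) * g m.
Proof.
rewrite (bigD1 m) //= mulrC; congr (_ * _); apply: eq_bigl => k.
by rewrite ltnS [RHS]ltn_neqAle andbC.
Qed.

Lemma prod_ord_geq :
  \prod_(k < N | (m <= k)%N) g k = g m * \prod_(k < N | (m < k)%N) g k.
Proof.
rewrite (bigD1 m) //=; congr (_ * _); apply: eq_bigl => k.
by rewrite [RHS]ltn_neqAle andbC eq_sym.
Qed.

End ProdSplit.

Section JointPolicy.
Variables (R : realType) (S A : finType) (N : nat).
Implicit Types (p q : cpolicy R S A N) (s : S) (a c : jact A N).

Definition agrees_before (j : nat) a c : bool :=
  [forall i : 'I_N, (i < j)%N ==> (a i == c i)].

Lemma agrees_beforeP j a c :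
  reflect (forall i : 'I_N, (i < j)%N -> a i = c i) (agrees_before j a c).
Proof.
apply: (iffP forallP) => [H i /(implyP (H i)) /eqP //|H i].
by apply/implyP => /H ->.
Qed.

Lemma prefix_eq_agrees (m : 'I_N) a c :
  (prefix m a == prefix m c) = agrees_before m a c.
Proof.
apply/eqP/agrees_beforeP => [E i lt_im|H].
  have := congr1 (fun t => tnth t (Ordinal lt_im)) E; rewrite !tnth_mktuple.
  by have -> : widen_ord (ltnW (ltn_ord m)) (Ordinal lt_im) = i by apply: val_inj.
by apply: eq_from_tnth => j; rewrite !tnth_mktuple; apply: H; rewrite /= ltn_ord.
Qed.

Lemma agrees_beforeS (j : 'I_N) a c x :
  agrees_before j.+1 a [ffun i => if i == j then x else c i] =
  agrees_before j a c && (a j == x).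
Proof.
apply/agrees_beforeP/andP => [H|[/agrees_beforeP H /eqP <-] i].
  split; last by rewrite H // ffunE eqxx.
  apply/agrees_beforeP => i lt_ij; rewrite H; last by rewrite ltnS ltnW.
  by rewrite ffunE -val_eqE /= ltn_eqF.
rewrite ltnS leq_eqVlt ffunE => /orP[/eqP/val_inj -> | lt_ij].
  by rewrite eqxx.
by rewrite -val_eqE /= ltn_eqF // H.
Qed.

(* Summing out the agents j, j+1, ... in order, each conditional sums to 1. *)
Lemma sum_tail_prod p s j c : valid_policy p -> (j <= N)%N ->
  \sum_(a | agrees_before j a c) \prod_(k < N | (j <= k)%N) p k s (prefix k a) (a k)
  = 1.
Proof.
move=> vp /subnK; move: (N - j)%N => d; elim: d j c => [|d IH] j c.
  rewrite add0n => Ej; subst j.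
  rewrite (big_pred1 c) => [|a].
    by rewrite big_pred0 // => k; rewrite leqNgt ltn_ord.
  apply/agrees_beforeP/eqP => [H|-> //].
  by apply/ffunP => i; apply: H.
move=> Ej; have lt_jN : (j < N)%N by rewrite -Ej addSn ltnS leq_addl.
pose j' : 'I_N := Ordinal lt_jN.
rewrite (partition_big (fun a => a j') predT) //=.
transitivity (\sum_x p j' s (prefix j' c) x); last by case: (vp j' s (prefix j' c)).
apply: eq_bigr => x _.
pose c' : jact A N := [ffun i => if i == j' then x else c i].
rewrite -[RHS]mulr1 -[X in _ * X](IH j.+1 c'); last by rewrite -addSnnS.
rewrite big_distrr /=; apply: eq_big => [a|a]; first by rewrite (agrees_beforeS j').
move=> /andP[/agrees_beforeP agree /eqP <-].
rewrite (prod_ord_geq _ j'); congr (_ * _).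
by congr p; apply/eqP; rewrite prefix_eq_agrees; apply/agrees_beforeP.
Qed.

Lemma jact_inhabited p s : valid_policy p -> inhabited (jact A N).
Proof.
move=> vp; case: (pickP A) => [x _|A0]; first by constructor; exact: [ffun=> x].
suff no_agent : 'I_N -> False.
  by constructor; exact: [ffun i => match no_agent i with end].
move=> i; pose i0 : 'I_N := Ordinal (leq_ltn_trans (leq0n i) (ltn_ord i)).
case: (vp i0 s [tuple]) => _; rewrite big_pred0 //.
by move/eqP; rewrite eq_sym oner_eq0.
Qed.

Lemma joint_ge0 p s a : valid_policy p -> 0 <= joint p s a.
Proof. by move=> vp; apply: prodr_ge0 => k _; case: (vp k s (prefix k a)). Qed.

Lemma joint_sum1 p s : valid_policy p -> \sum_a joint p s a = 1.
Proof.
move=> vp; case: (jact_inhabited s vp) => c.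
rewrite -(sum_tail_prod s c vp (leq0n N)).
by apply: eq_big => [a|a _]; [apply/esym/agrees_beforeP | apply: eq_bigl].
Qed.

Lemma sum_prefix_joint p s (m : 'I_N) a : valid_policy p ->
  \sum_(a' | prefix m a' == prefix m a) joint p s a' =
  \prod_(k < N | (k < m)%N) p k s (prefix k a) (a k).
Proof.
move=> vp; under eq_bigl do rewrite prefix_eq_agrees.
rewrite -[RHS]mulr1 -[X in _ * X](sum_tail_prod s a vp (ltnW (ltn_ord m))).
rewrite big_distrr /=.
apply: eq_bigr => a' /agrees_beforeP agree.
rewrite /joint (bigID (fun k : 'I_N => (k < m)%N)) /=; congr (_ * _).
  apply: eq_bigr => k lt_km; rewrite agree //; congr p.
  apply/eqP; rewrite prefix_eq_agrees; apply/agrees_beforeP => i lt_ik.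
  exact: agree (ltn_trans lt_ik lt_km).
by apply: eq_bigl => k; rewrite -leqNgt.
Qed.

Definition mixed_mean p q s (f : jact A N -> R) (m : nat) : R :=
  \sum_a (\prod_(k < N | (k < m)%N) p k s (prefix k a) (a k)) *
         (\prod_(k < N | (m <= k)%N) q k s (prefix k a) (a k)) * f a.

Lemma mixed_mean0 p q s f : mixed_mean p q s f 0 = \sum_a joint q s a * f a.
Proof. by apply: eq_bigr => a _; rewrite big_pred0 // mul1r. Qed.

Lemma mixed_meanN p q s f : mixed_mean p q s f N = \sum_a joint p s a * f a.
Proof.
apply: eq_bigr => a _; rewrite [X in _ * X * _]big_pred0 => [|k]; last first.
  by rewrite leqNgt ltn_ord.
by rewrite mulr1; congr (_ * _); apply: eq_bigl => k; rewrite ltn_ord.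
Qed.

(* [Qm] is [tail_mean] applied to [Q]. *)
Definition tail_mean q s (m : 'I_N) (f : jact A N -> R) (b : m.-tuple A) (x : A)
    : R :=
  \sum_(a | (prefix m a == b) && (a m == x))
    (\prod_(k < N | (m < k)%N) q k s (prefix k a) (a k)) * f a.

Lemma marg_tail_mean p q p' s (m : 'I_N) f : valid_policy p ->
  \sum_(b : m.-tuple A) marg p s b * \sum_x tail_mean q s f b x * p' m s b x =
  \sum_a (\prod_(k < N | (k < m)%N) p k s (prefix k a) (a k)) *
     (p' m s (prefix m a) (a m) *
      ((\prod_(k < N | (m < k)%N) q k s (prefix k a) (a k)) * f a)).
Proof.
move=> vp.
pose W a := (\prod_(k < N | (m < k)%N) q k s (prefix k a) (a k)) * f a.
pose G (b : m.-tuple A) := \sum_(a | prefix m a == b) p' m s b (a m) * W a.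
transitivity (\sum_(b : m.-tuple A) marg p s b * G b).
  apply: eq_bigr => b _; congr (_ * _).
  rewrite /G [RHS](partition_big (fun a => a m) predT) //=.
  apply: eq_bigr => x _; rewrite big_distrl /=.
  by apply: eq_bigr => a /andP[_ /eqP ->]; rewrite mulrC.
transitivity (\sum_a' joint p s a' * G (prefix m a')).
  rewrite [RHS](partition_big (fun a' => prefix m a') predT) //=.
  apply: eq_bigr => b _; rewrite /marg big_distrl /=.
  by apply: eq_big => // a' /eqP ->.
under eq_bigr do rewrite /G big_distrr big_mkcond /=.
rewrite exchange_big /=; apply: eq_bigr => a _.
rewrite -(sum_prefix_joint s m a vp) big_distrl [RHS]big_mkcond /=.
by apply: eq_bigr => a' _; case: (eqVneq (prefix m a) (prefix m a')) => [->|].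
Qed.

Lemma marg_tail_mean_diff p q s (m : 'I_N) f : valid_policy p ->
  \sum_(b : m.-tuple A) marg p s b *
    \sum_x tail_mean q s f b x * (p m s b x - q m s b x) =
  mixed_mean p q s f m.+1 - mixed_mean p q s f m.
Proof.
move=> vp.
under eq_bigr do under eq_bigr do rewrite mulrBr.
under eq_bigr do rewrite sumrB mulrBr.
rewrite sumrB !marg_tail_mean //; congr (_ - _); apply: eq_bigr => a _.
  by rewrite prod_ord_ltS !mulrA.
by rewrite prod_ord_geq !mulrA.
Qed.

Lemma sum_marg_tail_mean_diff p q s f : valid_policy p ->
  \sum_(m < N) \sum_(b : m.-tuple A) marg p s b *
    \sum_x tail_mean q s f b x * (p m s b x - q m s b x) =
  \sum_a joint p s a * f a - \sum_a joint q s a * f a.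
Proof.
move=> vp; under eq_bigr do rewrite marg_tail_mean_diff //.
rewrite -(big_mkord xpredT (fun m => mixed_mean p q s f m.+1 - mixed_mean p q s f m)).
by rewrite telescope_sumr // mixed_meanN mixed_mean0.
Qed.

End JointPolicy.

Section MarkovGame.
Variables (R : realType) (S A : finType) (N : nat).
Variables (P : S -> jact A N -> S -> R) (r : S -> jact A N -> R) (gamma : R).
Hypothesis kernelP : is_kernel P.
Hypothesis r_itv : forall s a, 0 <= r s a <= 1.
Hypothesis gamma_ge0 : 0 <= gamma.
Hypothesis gamma_lt1 : gamma < 1.
Implicit Types (p q : cpolicy R S A N) (s : S).
Local Open Scope classical_set_scope.

Lemma Ppol_ge0 p s s' : valid_policy p -> 0 <= Ppol P p s s'.
Proof.
move=> vp; apply: sumr_ge0 => a _.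
by rewrite mulr_ge0 ?joint_ge0 //; case: (kernelP s a).
Qed.

Lemma Ppol_sum1 p s : valid_policy p -> \sum_s' Ppol P p s s' = 1.
Proof.
move=> vp; rewrite /Ppol exchange_big /=.
under eq_bigr do rewrite -big_distrr /= (proj2 (kernelP _ _)) mulr1.
exact: joint_sum1.
Qed.

Lemma rstep_itv p t s : valid_policy p -> 0 <= rstep P r p t s <= 1.
Proof.
move=> vp; elim: t s => [|t IH] s /=; apply: convex_comb_itv => //.
- by move=> a; exact: joint_ge0.
- exact: joint_sum1.
- by move=> s'; exact: Ppol_ge0.
- exact: Ppol_sum1.
Qed.

Definition value_partial p s (n : nat) : R :=
  \sum_(0 <= t < n) gamma ^+ t * rstep P r p t s.

Lemma value_partialS p s n :
  value_partial p s n.+1 =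
  rpol r p s + gamma * \sum_s' Ppol P p s s' * value_partial p s' n.
Proof.
rewrite /value_partial big_nat_recl //= expr0 mul1r; congr (_ + _).
under [in RHS]eq_bigr do rewrite big_distrr /=.
rewrite [in RHS]exchange_big big_distrr /=; apply: eq_bigr => t _.
rewrite exprS -mulrA big_distrr; congr (_ * _); apply: eq_bigr => s' _.
by rewrite mulrCA.
Qed.

Lemma value_partial_cvg p s : valid_policy p -> cvgn (value_partial p s).
Proof.
move=> vp; apply: nondecreasing_is_cvgn.
  move=> n m le_nm; rewrite /value_partial (big_cat_nat (leq0n n) le_nm) /= lerDl.
  apply: sumr_ge0 => t _; rewrite mulr_ge0 ?exprn_ge0 //.
  by case/andP: (rstep_itv t s vp).
exists (1 - gamma)^-1 => _ [n _ <-].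
have gamma1_gt0 : 0 < 1 - gamma by rewrite subr_gt0.
apply: (@le_trans _ _ (\sum_(t < n) gamma ^+ t)).
  rewrite /value_partial big_mkord; apply: ler_sum => t _.
  by rewrite ler_piMr ?exprn_ge0 //; case/andP: (rstep_itv t s vp).
rewrite -div1r ler_pdivlMr // -opprB mulrN mulrC -subrX1.
by have := exprn_ge0 n gamma_ge0; lra.
Qed.

Lemma V_bellman p s : valid_policy p ->
  V P r gamma p s = rpol r p s + gamma * \sum_s' Ppol P p s s' * V P r gamma p s'.
Proof.
move=> vp.
have lim_shift : value_partial p s n.+1 @[n --> \oo] --> V P r gamma p s.
  by rewrite (cvg_shiftS (value_partial p s)); exact: value_partial_cvg.
have lim_rec : value_partial p s n.+1 @[n --> \oo] -->
    rpol r p s + gamma * \sum_s' Ppol P p s s' * V P r gamma p s'.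
  under eq_fun do rewrite value_partialS.
  apply: cvgD; first exact: cvg_cst.
  apply: cvgMr; apply: cvg_big => [|s' _]; first exact: add_continuous.
  by apply: cvgMr; exact: value_partial_cvg.
exact: (cvg_unique (@Rhausdorff R) lim_shift lim_rec).
Qed.

Lemma mean_Q p q s :
  \sum_a joint p s a * Q P r gamma q s a =
  rpol r p s + gamma * \sum_s' Ppol P p s s' * V P r gamma q s'.
Proof.
rewrite /Q; under eq_bigr do rewrite mulrDr; rewrite big_split /=; congr (_ + _).
rewrite /Ppol [RHS]big_distrr /=.
under [RHS]eq_bigr do rewrite big_distrl big_distrr /=.
rewrite [RHS]exchange_big /=; apply: eq_bigr => a _.
by rewrite !big_distrr /=; apply: eq_bigr => s' _; ring.
Qed.

Lemma mean_Q_self p s : valid_policy p ->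
  \sum_a joint p s a * Q P r gamma p s a = V P r gamma p s.
Proof. by move=> vp; rewrite mean_Q (V_bellman s vp). Qed.

Lemma stationary_sum_Ppol p nu (D : S -> R) : stationary P p nu ->
  \sum_s nu s * \sum_s' Ppol P p s s' * D s' = \sum_s nu s * D s.
Proof.
move=> [_ [_ nu_inv]]; under eq_bigr do rewrite big_distrr.
rewrite exchange_big; apply: eq_bigr => s' _ /=.
by rewrite (nu_inv s') big_distrl; apply: eq_bigr => s _; rewrite mulrA.
Qed.

Lemma performance_difference p q nu : valid_policy p -> stationary P p nu ->
  \sum_s nu s * (\sum_a joint p s a * Q P r gamma q s a - V P r gamma q s) =
  (1 - gamma) * (J P r gamma nu p - J P r gamma nu q).
Proof.
move=> vp nu_stat.
pose D s := V P r gamma p s - V P r gamma q s.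
have step s : \sum_a joint p s a * Q P r gamma q s a - V P r gamma q s =
    D s - gamma * \sum_s' Ppol P p s s' * D s'.
  have -> : \sum_s' Ppol P p s s' * D s' =
      \sum_s' Ppol P p s s' * V P r gamma p s' -
      \sum_s' Ppol P p s s' * V P r gamma q s'.
    by rewrite -sumrB; apply: eq_bigr => s' _; rewrite mulrBr.
  by rewrite mean_Q /D (V_bellman s vp); ring.
under eq_bigr do rewrite step mulrBr mulrCA.
rewrite sumrB -mulr_sumr stationary_sum_Ppol //.
have -> : \sum_s nu s * D s = J P r gamma nu p - J P r gamma nu q.
  by rewrite /J -sumrB; apply: eq_bigr => s _; rewrite mulrBr.
ring.
Qed.

End MarkovGame.

Theorem lemma1 (R : realType) (S A : finType) (N : nat)
  (P : S -> jact A N -> S -> R) (r : S -> jact A N -> R) (gamma : R)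
  (pistar pol : cpolicy R S A N) (nu : S -> R) :
  is_kernel P ->
  (forall s a, 0 <= r s a <= 1) ->
  0 <= gamma -> gamma < 1 ->
  optimal P r gamma pistar ->
  stationary P pistar nu ->
  valid_policy pol ->
  J P r gamma nu pistar - J P r gamma nu pol =
  (1 - gamma)^-1 *
  \sum_(m < N) \sum_(s : S) nu s *
     \sum_(b : m.-tuple A) marg pistar s b *
        \sum_(x : A) Qm P r gamma pol s b x * (pistar m s b x - pol m s b x).
Proof.
move=> kernelP r_itv gamma_ge0 gamma_lt1 [vpistar _] nu_stat vpol.
rewrite exchange_big /=.
under eq_bigr do
  rewrite -mulr_sumr sum_marg_tail_mean_diff // [X in _ - X]mean_Q_self //.
rewrite performance_difference // mulrA mulVf ?mul1r //.
by rewrite subr_eq0 gt_eqF.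
Qed.
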